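(* Let $\mathbf g:\mathbb{R}^{d_{\mathrm{input}}}\to\mathbb{R}^M$ be an $\ell_\infty$-dist net (as defined in the context) and let $f(\mathbf x)=\arg\max_{i\in\{1,\dots,M\}} g_i(\mathbf x)$. Let $(\mathbf x,y)$ be such that $\mathbf x$ is correctly classified, i.e. $f(\mathbf x)=y$, and let $\mathrm{margin}(\mathbf x;\mathbf g)$ denote the difference between the largest and the second-largest entries of $\mathbf g(\mathbf x)$. Then for every $\mathbf x'$ with $\|\mathbf x-\mathbf x'\|_\infty<\mathrm{margin}(\mathbf x;\mathbf g)/2$ we have $f(\mathbf x')=f(\mathbf x)$. Consequently the robust radius satisfies $R(f;\mathbf x,y)\ge \mathrm{margin}(\mathbf x;\mathbf g)/2$, i.e. $\mathrm{margin}(\mathbf x;\mathbf g)/2$ is a valid certified radius at $(\mathbf x,y)$.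
   Context: An $L$-layer $\ell_\infty$-dist net takes $\mathbf x^{(0)}=\mathbf x\in\mathbb{R}^{d_{\mathrm{input}}}$ and computes, for $1\le l\le L$, $1\le k\le d_l$, $x^{(l)}_k=\|\mathbf x^{(l-1)}-\mathbf w^{(l,k)}\|_\infty+b^{(l,k)}$ with arbitrary real parameters $\mathbf w^{(l,k)}$, $b^{(l,k)}$; with $d_L=M$ its output is $\mathbf g(\mathbf x)=(-x^{(L)}_1,\dots,-x^{(L)}_M)$. For a classifier $f$ and labeled point $(\mathbf x,y)$, the robust radius is $R(f;\mathbf x,y)=\inf_{f(\mathbf x')\ne f(\mathbf x)}\|\mathbf x'-\mathbf x\|_\infty$ if $f(\mathbf x)=y$ and $0$ otherwise; a certified radius is any lower bound on $R(f;\mathbf x,y)$. *)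

From HB Require Import structures.
From mathcomp Require Import all_boot all_order all_algebra.
From mathcomp Require Import all_classical all_reals ereal.
Set Implicit Arguments. Unset Strict Implicit. Unset Printing Implicit Defensive.
Import Order.TTheory GRing.Theory Num.Theory.
Local Open Scope ring_scope.

Section Defs.
Variable R : realType.

Definition vec (d : nat) := 'I_d -> R.

Definition linf_dist (d : nat) (x y : vec d) : R :=
  \big[Num.max/0]_(i < d) `|x i - y i|.

Definition dist_layer (d1 d2 : nat) (W : 'I_d2 -> vec d1) (b : vec d2)
  (x : vec d1) : vec d2 := fun k => linf_dist x (W k) + b k.

Inductive distnet : nat -> nat -> Type :=
| LastLayer (d1 d2 : nat) (W : 'I_d2 -> vec d1) (b : vec d2) : distnet d1 d2
| ConsLayer (d1 d2 d3 : nat) (W : 'I_d2 -> vec d1) (b : vec d2)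
    (rest : distnet d2 d3) : distnet d1 d3.

Fixpoint net_eval (d1 d3 : nat) (N : distnet d1 d3) : vec d1 -> vec d3 :=
  match N in distnet a c return vec a -> vec c with
  | LastLayer _ _ W b => fun x => dist_layer W b x
  | ConsLayer _ _ _ W b rest => fun x => net_eval rest (dist_layer W b x)
  end.

Definition net_out (din M : nat) (N : distnet din M) (x : vec din) : vec M :=
  fun i => - net_eval N x i.

(* f is an arg max classifier for g: f x is an index of a largest entry
   of g x (any tie-breaking rule) *)
Definition is_argmax_classifier (din M : nat) (g : vec din -> vec M)
  (f : vec din -> 'I_M) : Prop :=
  forall x (j : 'I_M), g x j <= g x (f x).

Definition sorted_entries (M : nat) (v : vec M) : seq R :=
  sort (fun a b : R => b <= a) [seq v i | i <- enum 'I_M].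

(* margin = largest entry - second largest entry (counted with multiplicity) *)
Definition margin (M : nat) (v : vec M) : R :=
  nth 0 (sorted_entries v) 0 - nth 0 (sorted_entries v) 1.

Definition robust_radius (din M : nat) (f : vec din -> 'I_M) (x : vec din)
  (y : 'I_M) : \bar R :=
  if f x == y then
    ereal_inf [set (linf_dist x' x)%:E | x' in [set x' | f x' != f x]]
  else 0%E.

End Defs.

(* Each layer x |-> (||x - w_k||_oo + b_k)_k is 1-Lipschitz for the sup
   distance, because | ||x - w|| - ||x' - w|| | <= ||x - x'||; hence so is the
   whole net, and every output entry moves by at most ||x - x'||_oo < margin/2.
   The winning entry thus loses less than margin/2 while any other entry, which
   started at least margin below it, gains less than margin/2: the arg max
   cannot change. *)
From HB Require Import structures.
From mathcomp Require Import all_boot all_order all_algebra.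
From mathcomp Require Import all_classical all_reals ereal.
From mathcomp Require Import lra.
Set Implicit Arguments. Unset Strict Implicit. Unset Printing Implicit Defensive.
Import Order.TTheory GRing.Theory Num.Theory.
Local Open Scope ring_scope.

Section LinfDist.
Context {R : realType} {d : nat}.
Implicit Types x y z : vec R d.

Lemma linf_dist_ge0 x y : 0 <= linf_dist x y.
Proof. by rewrite /linf_dist; elim/big_ind: _ => // a b ha hb; rewrite le_max ha. Qed.

Lemma ler_dist_linf_dist x y i : `|x i - y i| <= linf_dist x y.
Proof. exact: (le_bigmax 0 (fun i => `|x i - y i|) i). Qed.

Lemma linf_dist_le x y c :
  0 <= c -> (forall i, `|x i - y i| <= c) -> linf_dist x y <= c.
Proof. by move=> c_ge0 le_c; apply: bigmax_le. Qed.

Lemma linf_distC x y : linf_dist x y = linf_dist y x.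
Proof. by apply: eq_bigr => i _; rewrite distrC. Qed.

Lemma linf_dist_triangle x y z : linf_dist x z <= linf_dist x y + linf_dist y z.
Proof.
apply: linf_dist_le => [|i]; first by rewrite addr_ge0 ?linf_dist_ge0.
by apply: le_trans (ler_distD (y i) _ _) _; rewrite lerD ?ler_dist_linf_dist.
Qed.

End LinfDist.

Section Lipschitz.
Variable R : realType.

Lemma dist_layer_lipschitz d1 d2 (W : 'I_d2 -> vec R d1) b x x' :
  linf_dist (dist_layer W b x) (dist_layer W b x') <= linf_dist x x'.
Proof.
apply: linf_dist_le => [|k]; first exact: linf_dist_ge0.
rewrite /dist_layer opprD addrACA subrr addr0 ler_norml.
have := linf_dist_triangle x x' (W k); have := linf_dist_triangle x' x (W k).
rewrite (linf_distC x' x) => le_x' le_x; apply/andP; split; lra.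
Qed.

Lemma net_eval_lipschitz d1 d2 (N : distnet R d1 d2) x x' :
  linf_dist (net_eval N x) (net_eval N x') <= linf_dist x x'.
Proof.
elim: N x x' => [{}d1 {}d2 W b|{}d1 d d3 W b rest IH] x x' /=.
  exact: dist_layer_lipschitz.
by apply: le_trans (IH _ _) _; apply: dist_layer_lipschitz.
Qed.

Lemma net_out_lipschitz din M (N : distnet R din M) x x' i :
  `|net_out N x i - net_out N x' i| <= linf_dist x x'.
Proof.
rewrite /net_out -opprD normrN.
exact: le_trans (ler_dist_linf_dist _ _ i) (net_eval_lipschitz N x x').
Qed.

End Lipschitz.

Section Margin.
Variable R : realType.

Let geR : rel R := fun a b => b <= a.

Lemma count_gt_second_le1 (s : seq R) :
  sorted geR s -> (count (fun z => (s`_1 < z)%R) s <= 1)%N.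
Proof.
case: s => [|a [|b t]] //=; first by case: (0 < a).
move=> /andP[_ path_bt].
have geR_trans : transitive geR by move=> ? ? ? h1 h2; exact: le_trans h2 h1.
have -> : count (fun z => b < z) t = 0%N.
  rewrite -(count_pred0 t); apply: eq_in_count => z.
  by move/(allP (order_path_min geR_trans path_bt)); rewrite /geR leNgt => /negbTE.
by rewrite ltxx addn0; case: (b < a).
Qed.

Variables (M : nat) (v : vec R M).

Lemma perm_sorted_entries : perm_eq (sorted_entries v) [seq v i | i <- enum 'I_M].
Proof. by rewrite /sorted_entries perm_sort. Qed.

Lemma sorted_sorted_entries : sorted geR (sorted_entries v).
Proof. by apply: sort_sorted => a b; exact: le_total. Qed.

Lemma largest_entry_le (k : 'I_M) :
  (forall j, v j <= v k) -> (sorted_entries v)`_0 <= v k.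
Proof.
move=> k_max; have s_gt0 : (0 < size (sorted_entries v))%N.
  by rewrite (perm_size perm_sorted_entries) size_map size_enum_ord (leq_ltn_trans _ (ltn_ord k)).
have := mem_nth 0 s_gt0; rewrite (perm_mem perm_sorted_entries).
by case/mapP => i _ ->.
Qed.

Lemma count_enum_ord_ge2 (P : pred 'I_M) (j k : 'I_M) :
  j != k -> P j -> P k -> (2 <= count P (enum 'I_M))%N.
Proof.
move=> neq_jk Pj Pk.
have -> : count P (enum 'I_M) = #|P|.
  by rewrite cardE /enum_mem size_filter count_filter; apply: eq_count => i; rewrite inE andbT.
have <- : #|[set j; k]| = 2%N by rewrite cards2 neq_jk.
apply: subset_leq_card.
by apply/fintype.subsetP => i; rewrite !inE => /orP[] /eqP ->.
Qed.

Lemma min_le_second_entry (j k : 'I_M) :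
  j != k -> Num.min (v j) (v k) <= (sorted_entries v)`_1.
Proof.
move=> neq_jk; rewrite leNgt; apply/negP => gt_second.
have := count_gt_second_le1 sorted_sorted_entries.
rewrite (permP perm_sorted_entries) count_map; apply/negP; rewrite -ltnNge.
apply: (count_enum_ord_ge2 neq_jk); rewrite /preim /=.
- by apply: lt_le_trans gt_second _; rewrite ge_min lexx.
- by apply: lt_le_trans gt_second _; rewrite ge_min lexx orbT.
Qed.

Lemma argmax_margin_gap (k : 'I_M) :
  (forall j, v j <= v k) -> forall j, j != k -> v j <= v k - margin v.
Proof.
move=> k_max j neq_jk; have := min_le_second_entry neq_jk.
rewrite /margin (min_idPl (k_max j)); have := largest_entry_le k_max; lra.
Qed.

End Margin.

Lemma argmax_stable (R : realType) (M : nat) (v v' : vec R M) (k j : 'I_M) (e : R) :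
  (forall i, `|v i - v' i| <= e) -> 2 * e < margin v ->
  (forall i, v i <= v k) -> (forall i, v' i <= v' j) -> j = k.
Proof.
move=> near_v small_e k_max j_max; have [//|neq_jk] := eqVneq j k.
have := argmax_margin_gap k_max neq_jk; have := j_max k.
have := near_v j; have := near_v k; rewrite !ler_norml.
(* lra is very slow unless [margin v] is abstracted first. *)
move: small_e; set m := margin v => small_e /andP[? ?] /andP[? ?] ? ?.
exfalso; lra.
Qed.

Theorem fact2 (R : realType) (din M : nat) (hM : (2 <= M)%N)
  (N : distnet R din M) (f : vec R din -> 'I_M)
  (hf : is_argmax_classifier (net_out N) f)
  (x : vec R din) (y : 'I_M) (hy : f x = y) :
  (forall x' : vec R din,
      linf_dist x x' < margin (net_out N x) / 2 -> f x' = f x) /\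
  ((margin (net_out N x) / 2)%:E <= robust_radius f x y)%E.
Proof.
have stable x' : linf_dist x x' < margin (net_out N x) / 2 -> f x' = f x.
  move=> near_x; apply: (argmax_stable (net_out_lipschitz N x x')) (hf x) (hf x').
  by rewrite mulrC -ltr_pdivlMr.
split=> //; rewrite /robust_radius hy eqxx.
apply/ereal_infP => _ [x' /= moved <-]; rewrite lee_fin leNgt linf_distC.
by apply: contra moved => /stable ->; rewrite hy.
Qed.
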